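(* Let $0<r<1$. For every measurable $f$ on $\Omega$, $$\mu(\{\mathcal{P}f>\lambda\})\le\frac1r\,\mu(\{|f|>\lambda\}),\qquad\lambda\ge0.$$ In particular, for $p\in(0,\infty)$, $\|\mathcal{P}\|_{L^p(\Omega)\to L^p(\Omega)}\le r^{-1/p}$.
   Context: $(\Omega,\mathcal{F},\mu)$ is a probability space with a filtration $\{\mathcal{F}_k\}_{k\ge0}$ whose union generates $\mathcal{F}$; $\mathsf{E}_k=\mathsf{E}[\cdot|\mathcal{F}_k]$. The $k$-th conditional percentile at ratio $r$ is $\mathsf{P}^r_kf(x):=\inf\{t\in\mathbb{Q}:\mathsf{E}_k[\mathbf{1}_{\{f>t\}}](x)\le r\}$, and $\mathcal{P}f:=\mathcal{P}_rf:=\sup_{k\ge0}\mathsf{P}^r_k|f|$. *)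

From HB Require Import structures.
From mathcomp Require Import all_boot all_order all_algebra.
From mathcomp Require Import all_classical all_reals all_analysis.
Set Implicit Arguments. Unset Strict Implicit. Unset Printing Implicit Defensive.
Import Order.TTheory GRing.Theory Num.Theory.
Local Open Scope classical_set_scope.
Local Open Scope ring_scope.

Definition is_filtration d (T : measurableType d) (F : nat -> set (set T)) :=
  [/\ (forall k, sigma_algebra setT (F k)),
      (forall k, F k `<=` measurable),
      (forall k, F k `<=` F k.+1) &
      <<s \bigcup_k F k >> = measurable].

Definition sub_measurable d (T : measurableType d) (R : realType)
  (G : set (set T)) (h : T -> R) :=
  forall B : set R, measurable B -> G (h @^-1` B).

Definition is_cond_exp d (T : measurableType d) (R : realType)
  (mu : {measure set T -> \bar R}) (G : set (set T)) (g h : T -> R) :=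
  [/\ sub_measurable G h,
      mu.-integrable setT (EFin \o h) &
      forall A, G A -> (\int[mu]_(x in A) (h x)%:E = \int[mu]_(x in A) (g x)%:E)%E].

(* E k A : a version of E_k[1_A].
   k-th conditional percentile at ratio r:
   P^r_k g (x) = inf { t in Q : E_k[1_{g > t}](x) <= r } *)
Definition cond_percentile d (T : measurableType d) (R : realType)
  (E : nat -> set T -> T -> R) (k : nat) (r : R) (g : T -> R) (x : T) : \bar R :=
  ereal_inf [set (ratr t : R)%:E | t in
              [set t : rat | E k [set y | ratr t < g y] x <= r]].

Definition max_percentile d (T : measurableType d) (R : realType)
  (E : nat -> set T -> T -> R) (r : R) (f : T -> R) (x : T) : \bar R :=
  ereal_sup (range (fun k => cond_percentile E k r (fun y => `|f y|) x)).

(* Fix lam and let B be the set where lam < |f|.  Let S_k be the union over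
   rationals q of the F_k-measurable sets where E_k[1_{|f| > max(lam, q)}] > r;
   the sets S_k cover the set where lam < P f.  If A in F_k lies where
   E_k[1_C] > r, integrating the defining identity of E_k over A gives
   r mu(A) <= mu(A ∩ C).  Splitting into disjoint pieces, first over q and then
   over k (the piece S_k minus S_0, ..., S_(k-1) is still in F_k because the
   filtration increases), yields r mu(⋃_k S_k) <= mu(B): the weak type bound.
   Since E_0[1] = 1 almost everywhere, P f >= 0 almost everywhere, and the L^p
   bound follows from the weak type bound through the layer-cake formula. *)

From HB Require Import structures.
From mathcomp Require Import all_boot all_order all_algebra.
From mathcomp Require Import all_classical all_reals all_analysis.
From mathcomp Require Import measurable_realfun measurable_fun_approximation lra.

Set Implicit Arguments.
Unset Strict Implicit.
Unset Printing Implicit Defensive.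

Import Order.TTheory GRing.Theory Num.Theory.
Local Open Scope classical_set_scope.
Local Open Scope ring_scope.

Section level_sets.
Context d (T : measurableType d) (R : realType) (f : T -> R).
Hypothesis mf : measurable_fun setT f.

Lemma measurable_fun_o_infty (y : R) : measurable [set x | y < f x].
Proof. by rewrite -[X in measurable X]setTI -preimage_itvoy; exact: mf. Qed.

Lemma measurable_fun_infty_c (y : R) : measurable [set x | f x <= y].
Proof. by rewrite -[X in measurable X]setTI -preimage_itvNyc; exact: mf. Qed.

End level_sets.

Section conditional_expectation.
Context d (T : measurableType d) (R : realType).

Lemma sub_measurable_gt (G : set (set T)) (h : T -> R) (r : R) :
  sub_measurable G h -> G [set x | r < h x].
Proof. by move=> hG; rewrite -preimage_itvoy; exact: (hG _ (measurable_itv _)). Qed.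

Lemma sub_measurable_le (G : set (set T)) (h : T -> R) (r : R) :
  sub_measurable G h -> G [set x | h x <= r].
Proof. by move=> hG; rewrite -preimage_itvNyc; exact: (hG _ (measurable_itv _)). Qed.

Lemma cond_exp_measurable (mu : {measure set T -> \bar R}) (G : set (set T))
    (g h : T -> R) :
  G `<=` measurable -> is_cond_exp mu G g h -> measurable_fun setT h.
Proof. by move=> GM [hG _ _] _ B mB; rewrite setTI; exact/GM/hG. Qed.

Lemma cond_exp_indicT_le_null (mu : {finite_measure set T -> \bar R})
    (G : set (set T)) (h : T -> R) (r : R) :
  G `<=` measurable -> is_cond_exp mu G (\1_setT) h -> r < 1 ->
  mu [set x | h x <= r] = 0%E.
Proof.
move=> GM [hG hint hA] r1; set A := [set x | h x <= r].
have GA : G A by exact: sub_measurable_le.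
have mA := GM _ GA.
have : (mu A <= r%:E * mu A)%E.
  rewrite -integral_cst//.
  have -> : mu A = (\int[mu]_(x in A) (\1_setT x)%:E)%E.
    by rewrite integral_indic// setTI.
  rewrite -hA//; apply: le_integral => //.
  - exact: integrableS measurableT mA (@subsetT _ _) hint.
  - exact: finite_measure_integrable_cst.
  - by move=> x; rewrite inE /A /= lee_fin.
rewrite -(fineK (fin_num_measure _ _ mA)) -EFinM lee_fin => Ale.
congr EFin; have := fine_ge0 (measure_ge0 mu A); nra.
Qed.

End conditional_expectation.

Section density.
Local Open Scope ereal_scope.
Context d (T : measurableType d) (R : realType) (mu : {measure set T -> \bar R}).

Definition density_ge (r : R) (B A : set T) := r%:E * mu A <= mu (A `&` B).

Lemma density_geS {r : R} {B B' A : set T} : measurable A -> measurable B ->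
  measurable B' -> B `<=` B' -> density_ge r B A -> density_ge r B' A.
Proof.
move=> mA mB mB' BB' /le_trans; apply; apply: le_measure; rewrite ?inE.
- exact: measurableI.
- exact: measurableI.
- exact: setIS.
Qed.

Lemma density_ge_le {r : R} {B A : set T} : (0 < r)%R -> measurable A ->
  measurable B -> density_ge r B A -> mu A <= r^-1%:E * mu B.
Proof.
move=> r0 mA mB dA; have r'0 : 0 <= r^-1%:E by rewrite lee_fin invr_ge0 ltW.
rewrite -[mu A]mul1e -(mulVf (lt0r_neq0 r0)) EFinM -muleA.
apply: lee_wpmul2l => //; apply: le_trans dA _.
by apply: le_measure; rewrite ?inE//; exact: measurableI.
Qed.

Lemma density_ge_bigcup (r : R) (B : set T) (S : (set T)^nat) :
  (0 <= r)%R -> measurable B -> (forall n, measurable (S n)) ->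
  (forall n, density_ge r B (seqDU S n)) -> density_ge r B (\bigcup_n S n).
Proof.
move=> r0 mB mS dS; have mD := seqDU_measurable mS.
rewrite /density_ge seqDU_bigcup_eq setI_bigcupl.
rewrite !measure_bigcup//; last 2 first.
- by move=> n _; exact: measurableI.
- exact/trivIset_setIr/trivIset_seqDU.
rewrite -nneseriesZl//; apply: lee_nneseries => // n _.
  by rewrite mule_ge0// lee_fin.
exact: dS.
Qed.

Lemma density_ge_cond_exp (G : set (set T)) (C : set T) (h : T -> R) (r : R)
    (A : set T) :
  G `<=` measurable -> measurable C -> is_cond_exp mu G (\1_C) h ->
  (0 <= r)%R -> G A -> A `<=` [set x | r < h x]%R -> density_ge r C A.
Proof.
move=> GM mC hC r0 GA Ah; have mA := GM _ GA; have [_ _ hA] := hC.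
rewrite /density_ge -integral_cst// setIC -integral_indic// -hA//.
apply: ge0_le_integral => //.
- exact/measurable_EFinP/measurable_funTS/(cond_exp_measurable GM hC).
- by move=> x /Ah /ltW; rewrite lee_fin.
Qed.

Lemma density_ge_cond_exp_bigcup (I : countType) (G : set (set T))
    (C : I -> set T) (h : I -> T -> R) (r : R) (B A : set T) :
  sigma_algebra setT G -> G `<=` measurable -> measurable B ->
  (forall i, measurable (C i)) -> (forall i, C i `<=` B) ->
  (forall i, is_cond_exp mu G (\1_(C i)) (h i)) -> (0 <= r)%R ->
  G A -> A `<=` \bigcup_i [set x | r < h i x]%R -> density_ge r B A.
Proof.
move=> sG GM mB mC CB hC r0 GA Ah.
have GE := measurable_g_measurableTypeE sG.
pose S n := if @unpickle I n is Some i then A `&` [set x | r < h i x]%R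
            else set0.
have GS n : G (S n).
  rewrite /S; case: unpickle => [i|]; rewrite -GE; last exact: measurable0.
  by apply: measurableI; rewrite GE //; case: (hC i) => /sub_measurable_gt.
have -> : A = \bigcup_n S n.
  apply/seteqP; split => [x Ax|x [n _]]; last first.
    by rewrite /S; case: unpickle => // i [].
  by have [i _ hix] := Ah x Ax; exists (pickle i) => //; rewrite /S pickleK.
apply: density_ge_bigcup => // [n|n]; first exact: GM.
have GD : G (seqDU S n) by rewrite -GE; apply: seqDU_measurable => m; rewrite GE.
have DS : seqDU S n `<=` S n by move=> x [].
move: DS; rewrite {2}/S; case: unpickle => [i DS|]; last first.
  by rewrite subset0 => ->; rewrite /density_ge measure0 set0I measure0 mule0.
apply: (density_geS _ (mC i) mB (CB i)); first exact: GM.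
by apply: density_ge_cond_exp GM (mC i) (hC i) r0 GD _ => x /DS [].
Qed.

Lemma density_ge_bigcup_nested (F : nat -> set (set T)) (S : (set T)^nat)
    (r : R) (B : set T) :
  (forall k, sigma_algebra setT (F k)) -> (forall k, F k `<=` measurable) ->
  (forall k, F k `<=` F k.+1) -> measurable B -> (0 <= r)%R ->
  (forall k, F k (S k)) ->
  (forall k A, F k A -> A `<=` S k -> density_ge r B A) ->
  density_ge r B (\bigcup_k S k).
Proof.
move=> sF FM Fnested mB r0 FS dS.
have Fmono : {homo F : j k / (j <= k)%N >-> j `<=` k}.
  by apply: homo_leq => // [|i j k]; [exact: subset_refl | exact: subset_trans].
apply: density_ge_bigcup => // [k|k]; first exact/FM.
apply: (dS k) => [|x []//]; rewrite -(measurable_g_measurableTypeE (sF k)).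
apply/measurableD/bigsetU_measurable; rewrite measurable_g_measurableTypeE //.
by move=> j _; apply: (Fmono j); [exact/ltnW/ltn_ord | exact: FS].
Qed.

End density.

Section rational_infimum.
Local Open Scope ereal_scope.
Context (R : realType).

Lemma lt_ereal_inf_ratP (S : set rat) (l : R) :
  l%:E < ereal_inf [set (ratr t : R)%:E | t in S] <->
  exists2 q : rat, (l < ratr q)%R & forall t, S t -> (ratr q < ratr t :> R)%R.
Proof.
split=> [lS|[q lq qS]]; last first.
  apply: (lt_le_trans (_ : l%:E < (ratr q)%:E)); first by rewrite lte_fin.
  by apply: le_ereal_inf_tmp => _ [t St <-]; rewrite lee_fin ltW// qS.
have [y ly yS] : exists2 y : R,
    (l < y)%R & y%:E <= ereal_inf [set (ratr t)%:E | t in S].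
  move: lS; case: ereal_inf => [y| |]// lS; first by exists y; rewrite -?lte_fin.
  by exists (l + 1)%R; rewrite ?ltrDl ?leey.
have [q] := rat_in_itvoo ly; rewrite in_itv/= => /andP[lq qy].
exists q => // t St; rewrite -lte_fin (lt_le_trans _ (le_trans yS _)) ?lte_fin//.
by apply: ereal_inf_lbound; exists t.
Qed.

Lemma measurable_fun_ereal_inf_rat d (T : measurableType d) (S : rat -> set T) :
  (forall t, measurable (S t)) ->
  measurable_fun setT
    (fun x => ereal_inf [set (ratr t : R)%:E | t in [set t | S t x]]).
Proof.
move=> mS; apply: (measurability _ (ErealGenOInfty.measurableE R)) => //.
move=> _ [_ [l ->] <-]; rewrite setTI preimage_itvoy.
rewrite (_ : [set x | _] = \bigcup_(q : rat) if (l < ratr q)%R then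
    \bigcap_(t : rat) (if (ratr q < ratr t :> R)%R then setT else ~` S t)
  else set0).
  apply: bigcupT_measurable_rat => q; case: ifP => // _.
  rewrite -[X in measurable X]setCK setC_bigcap.
  apply: measurableC; apply: bigcupT_measurable_rat => t.
  by case: ifP => _; rewrite ?setCT ?setCK.
apply/seteqP; split=> x /= => [/lt_ereal_inf_ratP[q lq qS]|[q _]].
  exists q => //; rewrite lq => t _; case: ifP => // /negbT qt Stx.
  by move: qt; rewrite qS.
case: ifP => // lq qS; apply/lt_ereal_inf_ratP; exists q => // t Stx.
by have := qS t I; case: ifP.
Qed.

End rational_infimum.

Section percentile.
Local Open Scope ereal_scope.
Context d (T : measurableType d) (R : realType) (E : nat -> set T -> T -> R)
  (r : R).

Lemma cond_percentile_gt k (g : T -> R) x (l : R) :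
  l%:E < cond_percentile E k r g x ->
  exists2 q : rat, (l < ratr q)%R & (r < E k [set y | ratr q < g y] x)%R.
Proof.
move=> /lt_ereal_inf_ratP[q lq qS]; exists q => //.
by rewrite ltNge; apply/negP => /qS; rewrite ltxx.
Qed.

Lemma cond_percentile_ge0 k (g : T -> R) x :
  (forall y, 0 <= g y)%R -> (r < E k setT x)%R ->
  0 <= cond_percentile E k r g x.
Proof.
move=> g0 rE; apply: le_ereal_inf_tmp => _ [t /= Et <-]; rewrite lee_fin leNgt.
apply/negP => t0; move: Et; rewrite leNgt (_ : [set y | _] = setT) ?rE//.
by apply/seteqP; split => // y _ /=; exact: lt_le_trans t0 (g0 y).
Qed.

Lemma lt_max_percentile (f : T -> R) x (l : R) :
  l%:E < max_percentile E r f x <->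
  exists k, l%:E < cond_percentile E k r (fun y => `|f y|%R) x.
Proof.
split=> [/ereal_sup_gt[_ [k _ <-] lk]|[k lk]]; first by exists k.
by apply: (lt_le_trans lk); apply: ereal_sup_ubound; exists k.
Qed.

Lemma measurable_max_percentile (f : T -> R) : measurable_fun setT f ->
  (forall k C, measurable C -> measurable_fun setT (E k C)) ->
  measurable_fun setT (max_percentile E r f).
Proof.
move=> mf mE; have mfn : measurable_fun setT (fun y => `|f y|%R).
  exact: measurableT_comp (@normr_measurable _ _) mf.
have mP k : measurable_fun setT (cond_percentile E k r (fun y => `|f y|%R)).
  apply: (measurable_fun_ereal_inf_rat (S := fun t x =>
    (E k [set y | ratr t < `|f y|%R] x <= r)%R)) => t.
  exact/measurable_fun_infty_c/mE/measurable_fun_o_infty.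
rewrite (_ : max_percentile E r f = fun x => esups (fun k =>
    cond_percentile E k r (fun y => `|f y|%R) x) 0%N); last first.
  apply/funext => x; rewrite /esups /sdrop /=; congr ereal_sup.
  by apply/seteqP; split => _ [k _ <-]; exists k.
exact: measurable_fun_esups.
Qed.

End percentile.

Lemma max_percentile_weak_type d (T : measurableType d) (R : realType)
    (mu : {measure set T -> \bar R}) (F : nat -> set (set T))
    (E : nat -> set T -> T -> R) (r : R) (f : T -> R) (lam : R) :
  is_filtration F ->
  (forall k A, measurable A -> is_cond_exp mu (F k) (\1_A) (E k A)) ->
  0 < r -> measurable_fun setT f ->
  (mu [set x | lam%:E < max_percentile E r f x] <=
   r^-1%:E * mu [set x | (lam < `|f x|)%R])%E.
Proof.
move=> [sF FM Fnested _] hE r0 mf.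
have mfn : measurable_fun setT (fun y => `|f y|).
  exact: measurableT_comp (@normr_measurable _ _) mf.
pose C q := [set y | Num.max lam (ratr q) < `|f y|].
have mC q : measurable (C q) by exact: measurable_fun_o_infty.
have CB q : C q `<=` [set y | lam < `|f y|].
  by move=> y; rewrite /C /= gt_max => /andP[].
have mB : measurable [set y | lam < `|f y|] by exact: measurable_fun_o_infty.
pose S k := \bigcup_(q : rat) [set x | r < E k (C q) x].
have FS k : F k (S k).
  rewrite -(measurable_g_measurableTypeE (sF k)).
  apply: bigcupT_measurable_rat => q; rewrite measurable_g_measurableTypeE//.
  by case: (hE k _ (mC q)) => /sub_measurable_gt.
have mS : measurable (\bigcup_k S k) by apply: bigcupT_measurable => k; exact: FM.
have mPf : measurable [set x | lam%:E < max_percentile E r f x]%E.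
  rewrite -[X in measurable X]setTI; apply: emeasurable_fun_o_infty => //.
  apply: measurable_max_percentile => // k A mA.
  exact: cond_exp_measurable (hE k A mA).
apply: (@le_trans _ _ (mu (\bigcup_k S k))).
  apply: le_measure; rewrite ?inE// => x /lt_max_percentile[k].
  move=> /cond_percentile_gt[q lq rE]; exists k => //; exists q => //.
  by rewrite /C max_r// ltW.
apply: density_ge_le => //.
apply: (density_ge_bigcup_nested sF FM Fnested mB (ltW r0) FS) => k A FA AS.
exact: density_ge_cond_exp_bigcup (sF k) (FM k) mB mC CB
  (fun q => hE k _ (mC q)) (ltW r0) FA AS.
Qed.

Lemma max_percentile_ge0_ae d (T : measurableType d) (R : realType)
    (mu : {finite_measure set T -> \bar R}) (G : set (set T))
    (E : nat -> set T -> T -> R) (r : R) (f : T -> R) :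
  G `<=` measurable -> is_cond_exp mu G (\1_setT) (E 0%N setT) -> r < 1 ->
  {ae mu, forall x, (0 <= max_percentile E r f x)%E}.
Proof.
move=> GM hE r1; exists [set x | E 0%N setT x <= r]; split.
- exact/measurable_fun_infty_c/(cond_exp_measurable GM hE).
- exact: cond_exp_indicT_le_null GM hE r1.
move=> x /= Pfx; rewrite leNgt; apply/negP => rE; apply: Pfx.
apply: (le_trans (cond_percentile_ge0 (g := fun y => `|f y|) _ rE)) => //.
by apply: ereal_sup_ubound; exists 0%N.
Qed.

Section weak_type_powR.
Local Open Scope ereal_scope.
Context d (T : measurableType d) (R : realType) (mu : {measure set T -> \bar R}).
Variables (G : T -> \bar R) (p : R).
Hypotheses (mG : measurable_fun setT G) (p0 : (0 < p)%R).
Hypothesis G_fin : {ae mu, forall x, 0 <= G x < +oo}.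

Lemma measurable_fine_powR : measurable_fun setT (fun x => fine (G x) `^ p)%R.
Proof.
apply: (measurableT_comp (measurable_powR _)).
exact: measurableT_comp (fine_measurable measurableT) mG.
Qed.

Lemma integral_abse_powR_fine :
  \int[mu]_x (`|G x| `^ p) = \int[mu]_x (fine (G x) `^ p)%:E.
Proof.
have [N [mN N0 GN]] := G_fin; apply: ae_eq_integral => //.
- apply: (measurableT_comp (measurable_poweR _)).
  by apply: measurableT_comp mG; exact: abse_measurable.
- exact/measurable_EFinP/measurable_fine_powR.
exists N; split => // x /= neq; apply: GN => /andP[G0x Gxy]; apply: neq => _.
by move: G0x Gxy; case: (G x) => //= y y0 _; rewrite ger0_norm -?lee_fin.
Qed.

Lemma weak_type_powR (f : T -> R) (c s : R) : (0 <= c)%R -> (0 <= s)%R ->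
  measurable_fun setT f ->
  (forall l, (0 <= l)%R ->
     mu [set x | l%:E < G x] <= c%:E * mu [set x | (l < `|f x|)%R]) ->
  mu [set x | (s < fine (G x) `^ p)%R] <= c%:E * mu [set x | (s < `|f x| `^ p)%R].
Proof.
move=> c0 s0 mf wG; have [N [mN N0 GN]] := G_fin.
have mfn : measurable_fun setT (fun x => `|f x|)%R.
  exact: measurableT_comp (@normr_measurable _ _) mf.
have mfp : measurable_fun setT (fun x => `|f x| `^ p)%R.
  exact: measurableT_comp (measurable_powR _) mfn.
pose l := (s `^ p^-1)%R; have lp : (l `^ p = s)%R.
  by rewrite -powRrM mulVf ?gt_eqF// powRr1.
have mGl : measurable [set x | l%:E < G x].
  by rewrite -[X in measurable X]setTI; exact: emeasurable_fun_o_infty.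
apply: (@le_trans _ _ (mu ([set x | l%:E < G x] `|` N))).
  apply: le_measure; rewrite ?inE//.
  - exact/measurable_fun_o_infty/measurable_fine_powR.
  - exact: measurableU.
  move=> x /= sG; have [Nx|nNx] := pselect (N x); [by right|left].
  have /andP[] : 0 <= G x < +oo by apply: contrapT => /GN.
  move: sG; case: (G x) => //= y sy y0 _; rewrite lte_fin ltNge.
  apply/negP => yl; move: sy; rewrite -lp ltNge => /negP; apply.
  by apply: ge0_ler_powR => //; [exact: ltW | rewrite nnegrE powR_ge0].
rewrite measureU0//; apply: le_trans (wG _ (powR_ge0 _ _)) _.
apply: lee_wpmul2l; first by rewrite lee_fin.
apply: le_measure; rewrite ?inE//.
- exact: measurable_fun_o_infty.
- exact: measurable_fun_o_infty.
by move=> x /= lf; rewrite -lp gt0_ltr_powR// ?nnegrE ?powR_ge0// ltW.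
Qed.

End weak_type_powR.

Section finite_measure_tail.
Local Open Scope ereal_scope.
Context d (T : measurableType d) (R : realType)
  (mu : {finite_measure set T -> \bar R}).

Lemma measure_gt_norm_cvg0 (f : T -> R) : measurable_fun setT f ->
  mu [set x | (n%:R < `|f x|)%R] @[n --> \oo] --> 0.
Proof.
move=> mf; have mfn : measurable_fun setT (fun x => `|f x|%R).
  exact: measurableT_comp (@normr_measurable _ _) mf.
rewrite -(measure0 mu).
have <- : \bigcap_n [set x | (n%:R < `|f x|)%R] = set0.
  rewrite -subset0 => x /(_ (Num.bound `|f x|) I) /=.
  by rewrite ltNge (ltW (archi_boundP (normr_ge0 _))).
apply: nonincreasing_cvg_mu => [|n||m n mn].
- by rewrite -ge0_fin_numE// fin_num_measure//; exact: measurable_fun_o_infty.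
- exact: measurable_fun_o_infty.
- by apply: bigcapT_measurable => n; exact: measurable_fun_o_infty.
- by apply/subsetPset => x /=; apply: le_lt_trans; rewrite ler_nat.
Qed.

Lemma weak_type_ae_finite (G : T -> \bar R) (f : T -> R) (c : R) :
  measurable_fun setT G -> measurable_fun setT f ->
  (forall l, (0 <= l)%R ->
     mu [set x | l%:E < G x] <= c%:E * mu [set x | (l < `|f x|)%R]) ->
  {ae mu, forall x, G x < +oo}.
Proof.
move=> mG mf wG; have mGy : measurable [set x | G x = +oo].
  rewrite -[X in measurable X]setTI.
  exact: (mG measurableT _ (emeasurable_set1 _)).
exists [set x | G x = +oo]; split => //; last first.
  by move=> x /= /negP; rewrite -leNgt leye_eq => /eqP.
apply/eqP; rewrite eq_le measure_ge0 andbT.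
have cv := cvgeZl (y := c%:E) isT (measure_gt_norm_cvg0 mf).
rewrite -(mule0 c%:E) -(cvg_lim _ cv)//.
apply: lime_ge; first by apply/cvg_ex; eexists; exact: cv.
apply/nearW => n; apply: le_trans (wG _ (ler0n _ n)).
apply: le_measure; rewrite ?inE//; last by move=> x /= ->; exact: ltry.
rewrite -[X in measurable X]setTI; exact: emeasurable_fun_o_infty.
Qed.

End finite_measure_tail.

Section weak_type_Lnorm.
Local Open Scope ereal_scope.
Context d (T : measurableType d) (R : realType) (mu : probability T R).

Lemma ge0_le_integral_tail (g h : T -> R) (c : R) :
  (0 <= c)%R -> measurable_fun setT g -> measurable_fun setT h ->
  (forall x, 0 <= g x)%R -> (forall x, 0 <= h x)%R ->
  (forall s, (0 <= s)%R ->
     mu [set x | (s < g x)%R] <= c%:E * mu [set x | (s < h x)%R]) ->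
  \int[mu]_x (g x)%:E <= c%:E * \int[mu]_x (h x)%:E.
Proof.
move=> c0 mg mh g0 h0 gh.
pose X : {RV mu >-> R} := mfun_Sub (mem_set mg : g \in mfun).
pose Y : {RV mu >-> R} := mfun_Sub (mem_set mh : h \in mfun).
have -> : \int[mu]_x (g x)%:E = 'E_mu[X] by rewrite expectation_def.
have -> : \int[mu]_x (h x)%:E = 'E_mu[Y] by rewrite expectation_def.
rewrite !ge0_expectation_ccdf// -ge0_integralZl//; last first.
  exact: measurable_funTS (ccdf_measurable _).
apply: ge0_le_integral => //.
- exact: measurable_funTS (ccdf_measurable _).
- by apply/measurable_funTS/measurable_funeM; exact: ccdf_measurable.
move=> s; rewrite /= in_itv/= andbT => s0.
by rewrite /ccdf /distribution /pushforward !preimage_itvoy; exact: gh.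
Qed.

Lemma Lnorm_le_weak_type (G : T -> \bar R) (f : T -> R) (c p : R) :
  (0 <= c)%R -> (0 < p)%R -> measurable_fun setT G -> measurable_fun setT f ->
  {ae mu, forall x, 0 <= G x} ->
  (forall l, (0 <= l)%R ->
     mu [set x | l%:E < G x] <= c%:E * mu [set x | (l < `|f x|)%R]) ->
  Lnorm mu p%:E G <= (c `^ p^-1)%:E * Lnorm mu p%:E (EFin \o f).
Proof.
move=> c0 p0 mG mf G0 wG.
have G_fin : {ae mu, forall x, 0 <= G x < +oo}.
  by apply: filterS2 G0 (weak_type_ae_finite mG mf wG) => x -> ->.
have mfp : measurable_fun setT (fun x => `|f x| `^ p)%R.
  by apply: (measurableT_comp (measurable_powR _)); exact: measurableT_comp mf.
have := ge0_le_integral_tail c0 (measurable_fine_powR p mG) mfp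
  (fun x => powR_ge0 _ _) (fun x => powR_ge0 _ _)
  (fun s s0 => weak_type_powR mG p0 G_fin c0 s0 mf wG).
rewrite unlock /= (integral_abse_powR_fine p mG G_fin) => le_int.
have int_f : 0 <= \int[mu]_x (`|f x| `^ p)%:E.
  by apply: integral_ge0 => x _; rewrite lee_fin powR_ge0.
rewrite -poweR_EFin -poweRM ?lee_fin//; apply: gt0_ler_poweR => //.
- by rewrite invr_ge0 ltW.
- by rewrite in_itv /= leey andbT integral_ge0// => x _; rewrite lee_fin powR_ge0.
- by rewrite in_itv /= leey andbT mule_ge0 ?lee_fin.
Qed.

End weak_type_Lnorm.

Theorem lemma1p1 (d : measure_display) (T : measurableType d) (R : realType)
  (mu : probability T R) (F : nat -> set (set T)) (E : nat -> set T -> T -> R)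
  (r : R) :
  is_filtration F ->
  (forall k (A : set T), measurable A -> is_cond_exp mu (F k) (\1_A) (E k A)) ->
  0 < r < 1 ->
  forall f : T -> R, measurable_fun setT f ->
  (forall lam : R, 0 <= lam ->
     (mu [set x | (EFin lam < max_percentile E r f x)%E]
       <= EFin (r^-1)%R * mu [set x | (lam < `|f x|)%R])%E) /\
  (forall p : R, 0 < p ->
     (Lnorm mu (EFin p) (max_percentile E r f)
       <= EFin (r^-1 `^ p^-1)%R * Lnorm mu (EFin p) (EFin \o f))%E).
Proof.
move=> hF hE /andP[r0 r1] f mf; have [_ FM _ _] := hF.
have weak lam := max_percentile_weak_type lam hF hE r0 mf.
split=> [lam _|p p0]; first exact: weak.
apply: Lnorm_le_weak_type => //.
- by rewrite invr_ge0 ltW.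
- apply: measurable_max_percentile => // k A mA.
  exact: cond_exp_measurable (FM k) (hE k A mA).
- exact: max_percentile_ge0_ae (FM 0%N) (hE 0%N _ measurableT) r1.
- by move=> lam _; exact: weak.
Qed.
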